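(* Let $q\in(0,1]$. Assume [A7$'$]: for some $R>0$, (i) for every $T\in\mathbb T$, $\mathbb H_T$ is almost surely thrice differentiable in $\theta$ on $B=\{\theta\in\Theta:|\theta-\theta^*|<R\}$; (ii) $\|a_T\|\partial_\theta\mathbb H_T(\theta^* )=O_p(1)$; (iii) $\|a_T\|^2\sup_{\theta\in B}|\partial_\theta^2\mathbb H_T(\theta)|=O_p(1)$; (iv) $\|a_T\|^2\sup_{\theta\in B}|\partial_\theta^3\mathbb H_T(\theta)|=O_p(1)$. Then the following hold: [A8] for all $M>0$, $\sup_{u\in\mathbb U_T,\ |u|<M}|\mathbb H_T(\theta^*+a_Tu)-\mathbb H_T(\theta^* )|=O_p(1)$ as $T\to\infty$; [A9] for all $M>0$, $\sup_{u,v\in\mathbb U_T,\ |u|,|v|<M,\ u\ne v}\frac{|\mathbb H_T(\theta^*+a_Tu)-\mathbb H_T(\theta^*+a_Tv)|}{|u-v|^q}=O_p(1)$ as $T\to\infty$.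
   Context: Let $\Theta\subset\mathbb R^{\mathsf p}$ be a bounded open set with closure $\overline\Theta$ and $\theta^*\in\Theta$. Let $(\Omega,\mathcal F,P)$ be a probability space, $\mathbb T\subset\mathbb R_{\ge0}$ with $\sup\mathbb T=\infty$; limits $T\to\infty$ are along $\mathbb T$. For each $T\in\mathbb T$, $\mathbb H_T:\Omega\times\overline\Theta\to\mathbb R$ is a random field continuous in $\theta$ for every $\omega$. $a_T$ is a deterministic invertible diagonal $\mathsf p\times\mathsf p$ matrix with $\|a_T\|\to0$ ($\|\cdot\|$ the spectral norm), and $\mathbb U_T=\{u\in\mathbb R^{\mathsf p}:\theta^*+a_Tu\in\overline\Theta\}$. $\partial_\theta^k\mathbb H_T$ is the $k$-th derivative tensor in $\theta$. $X_T=O_p(1)$ means tightness: for every $\epsilon>0$ there are $\mathcal T\in\mathbb T$, $M>0$ with $P(|X_T|>M)<\epsilon$ for $T\ge\mathcal T$. *)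

From HB Require Import structures.
From mathcomp Require Import all_boot all_order all_algebra.
From mathcomp Require Import all_classical all_reals all_analysis.
Set Implicit Arguments. Unset Strict Implicit. Unset Printing Implicit Defensive.
Import Order.TTheory GRing.Theory Num.Theory.
Import numFieldNormedType.Exports.
Local Open Scope classical_set_scope.
Local Open Scope ring_scope.

Section Defs.
Variable R : realType.

Definition enorm (p : nat) (x : 'rV[R]_p) : R :=
  Num.sqrt (\sum_(i < p) x ord0 i ^+ 2).

Definition specnorm (p : nat) (A : 'M[R]_p) : R :=
  sup [set enorm (u *m A) | u in [set u : 'rV[R]_p | enorm u <= 1]].

Definition ebasis (p : nat) (i : 'I_p) : 'rV[R]_p := delta_mx ord0 i.

Definition partial (p : nat) (f : 'rV[R]_p -> R) (i : 'I_p) : 'rV[R]_p -> R :=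
  fun th => 'D_(ebasis i) f th.

Definition d1norm (p : nat) (f : 'rV[R]_p -> R) (th : 'rV[R]_p) : R :=
  Num.sqrt (\sum_(i < p) (partial f i th) ^+ 2).
Definition d2norm (p : nat) (f : 'rV[R]_p -> R) (th : 'rV[R]_p) : R :=
  Num.sqrt (\sum_(i < p) \sum_(j < p) (partial (partial f i) j th) ^+ 2).
Definition d3norm (p : nat) (f : 'rV[R]_p -> R) (th : 'rV[R]_p) : R :=
  Num.sqrt (\sum_(i < p) \sum_(j < p) \sum_(k < p)
     (partial (partial (partial f i) j) k th) ^+ 2).

Definition thrice_diff_on (p : nat) (f : 'rV[R]_p -> R) (B : set 'rV[R]_p) : Prop :=
  forall th, B th ->
    [/\ differentiable f th,
        (forall i, differentiable (partial f i) th) &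
        (forall i j, differentiable (partial (partial f i) j) th)].

Definition outer_lt (d : measure_display) (Omega : measurableType d)
  (P : probability Omega R) (A : set Omega) (eps : R) : Prop :=
  exists E, [/\ measurable E, A `<=` E & (P E < eps%:E)%E].

(* "sup S_T(omega) = O_p(1)" along Tset, for families of sets of nonnegative
   reals: sup S > K iff some element of S exceeds K. *)
Definition OpSup (d : measure_display) (Omega : measurableType d)
  (P : probability Omega R) (Tset : set R) (S : R -> Omega -> set R) : Prop :=
  forall eps : R, 0 < eps ->
    exists T0, Tset T0 /\ exists K : R, 0 < K /\
      forall T, Tset T -> T0 <= T ->
        outer_lt P [set w | exists x, S T w x /\ K < x] eps.

Definition Op1 (d : measure_display) (Omega : measurableType d)
  (P : probability Omega R) (Tset : set R) (X : R -> Omega -> R) : Prop :=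
  OpSup P Tset (fun T w => [set `|X T w|]).

End Defs.

(* For T large, the box of half-width M ||a_T|| around thstar lies in the ball B of [A7'],
   so there H_T is twice differentiable.  The mean value theorem along segments of the box gives
   ||a_T|| |dH_T| <= ||a_T|| |dH_T(thstar)| + p M ||a_T||^2 sup_B |d^2 H_T| on the box, and a
   second application shows that u |-> H_T(thstar + a_T u) is Lipschitz on |u| <= M with a
   constant built from the two O_p(1) quantities of [A7'] (ii) and (iii).  This gives [A8] and,
   since |u - v|^(1-q) is bounded on |u|, |v| < M, also [A9]. *)

From HB Require Import structures.
From mathcomp Require Import all_boot all_order all_algebra.
From mathcomp Require Import all_classical all_reals all_analysis.
From mathcomp Require Import ring lra.
Import Order.TTheory GRing.Theory Num.Theory.
Import numFieldNormedType.Exports.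
Local Open Scope classical_set_scope.
Local Open Scope ring_scope.
Set Implicit Arguments. Unset Strict Implicit. Unset Printing Implicit Defensive.

Section Norms.
Variable R : realType.

Lemma sumr_const_ord n (x : R) : \sum_(k < n) x = n%:R * x.
Proof. by rewrite sumr_const card_ord mulr_natl. Qed.

Lemma normr_le_sqrt_sum_sqr {I : finType} (F : I -> R) i :
  `|F i| <= Num.sqrt (\sum_j F j ^+ 2).
Proof.
rewrite -sqrtr_sqr ler_sqrt ?sumr_ge0 // => [|j _]; last exact: sqr_ge0.
by rewrite (bigD1 i) //= lerDl sumr_ge0 // => j _; exact: sqr_ge0.
Qed.

Lemma coord_le_enorm p (w : 'rV[R]_p) k : `|w 0 k| <= enorm w.
Proof. rewrite /enorm; exact: (normr_le_sqrt_sum_sqr (fun j => w ord0 j) k). Qed.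

Lemma enorm_ge0 p (w : 'rV[R]_p) : 0 <= enorm w.
Proof. exact: sqrtr_ge0. Qed.

Lemma enorm0 p : enorm (0 : 'rV[R]_p) = 0.
Proof. by rewrite /enorm big1 ?sqrtr0 // => j _; rewrite mxE expr0n. Qed.

Lemma enorm_le_coord p (w : 'rV[R]_p) (c : R) :
  (forall k, `|w 0 k| <= c) -> enorm w <= p%:R * c.
Proof.
case: p w => [|n] w w_le; first by rewrite /enorm big_ord0 sqrtr0 mul0r.
have c_ge0 : 0 <= c := le_trans (normr_ge0 _) (w_le ord0).
rewrite -(ger0_norm (mulr_ge0 (ler0n _ n.+1) c_ge0)) -sqrtr_sqr ler_sqrt ?sqr_ge0 //.
apply: (@le_trans _ _ (\sum_(k < n.+1) c ^+ 2)).
  by apply: ler_sum => k _; rewrite -real_normK ?num_real // lerXn2r ?nnegrE.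
by rewrite sumr_const_ord exprMn ler_wpM2r ?sqr_ge0 // -natrX ler_nat leq_pmull.
Qed.

Lemma enorm_subr_le p (u v : 'rV[R]_p) M :
  enorm u <= M -> enorm v <= M -> enorm (u - v) <= p%:R * (2 * M).
Proof.
move=> u_le v_le; apply: enorm_le_coord => k; rewrite !mxE mulr_natl mulr2n.
apply: le_trans (ler_normB _ _) _.
by rewrite lerD // (le_trans (coord_le_enorm _ k)).
Qed.

Lemma partial_le_d1norm p (f : 'rV[R]_p -> R) th j : `|partial f j th| <= d1norm f th.
Proof. exact: (normr_le_sqrt_sum_sqr (fun i => partial f i th) j). Qed.

Lemma partial_le_d2norm p (f : 'rV[R]_p -> R) th i j :
  `|partial (partial f i) j th| <= d2norm f th.
Proof.
rewrite /d2norm pair_bigA /=.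
exact: (normr_le_sqrt_sum_sqr (fun ij : 'I_p * 'I_p => partial (partial f ij.1) ij.2 th) (i, j)).
Qed.

End Norms.

Section DiagonalScaling.
Variables (R : realType) (p : nat) (A : 'M[R]_p).
Hypothesis A_diag : is_diag_mx A.

Lemma diag_mulmx_coord (w : 'rV[R]_p) k : (w *m A) 0 k = w 0 k * A k k.
Proof.
move/is_diag_mxP: A_diag => A0.
by rewrite mxE (bigD1 k) //= big1 ?addr0 // => i ik; rewrite A0 ?mulr0.
Qed.

Lemma diag_specnorm_has_sup :
  has_sup [set enorm (u *m A) | u in [set u : 'rV[R]_p | enorm u <= 1]].
Proof.
split; first by exists (enorm (0 *m A)), 0 => //=; rewrite enorm0.
exists (Num.sqrt (\sum_j A j j ^+ 2)) => _ [u /= u_le1 <-].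
rewrite ler_sqrt ?sumr_ge0 // => [|j _]; last exact: sqr_ge0.
apply: ler_sum => j _; rewrite diag_mulmx_coord exprMn ler_piMl ?sqr_ge0 //.
rewrite -real_normK ?num_real // -(expr1n _ 2) lerXn2r ?nnegrE //.
exact: le_trans (coord_le_enorm u j) u_le1.
Qed.

Lemma diag_specnorm_ge0 : 0 <= specnorm A.
Proof.
apply: (sup_upper_bound diag_specnorm_has_sup).
by exists 0; rewrite /= ?mul0mx enorm0.
Qed.

Lemma diag_entry_le_specnorm k : `|A k k| <= specnorm A.
Proof.
have e_k1 : enorm (ebasis R k) = 1.
  rewrite /enorm (bigD1 k) //= big1 ?addr0 => [|j jk].
    by rewrite mxE !eqxx expr1n sqrtr1.
  by rewrite mxE eqxx (negbTE jk) expr0n.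
apply: le_trans (sup_upper_bound diag_specnorm_has_sup _); last first.
  by exists (ebasis R k) => //=; rewrite e_k1.
by have := coord_le_enorm (ebasis R k *m A) k; rewrite diag_mulmx_coord mxE !eqxx mul1r.
Qed.

End DiagonalScaling.

Section MeanValue.
Variables (R : realType) (p : nat) (f : 'rV[R]_p -> R).

Lemma is_derive_line (y v : 'rV[R]_p) (t : R) :
  differentiable f (y + t *: v) ->
  is_derive t 1 (fun s : R => f (y + s *: v)) (\sum_k v 0 k * partial f k (y + t *: v)).
Proof.
move=> df; set z := y + t *: v.
have quotientE : (fun h : R => h^-1 *: ((fun s : R => f (y + s *: v)) (h *: 1 + t) - f z))
    = (fun h : R => h^-1 *: (f (h *: v + z) - f z)).
  apply/funext => h; rewrite /z -[h *: 1]/(h * 1) mulr1 scalerDl addrCA addrA.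
  by rewrite [y + _]addrC.
have line_derivable : derivable (fun s : R => f (y + s *: v)) t 1.
  by rewrite /derivable /shift /= quotientE; exact: (diff_derivable (v := v) df).
suff -> : \sum_k v 0 k * partial f k z = 'D_1 (fun s : R => f (y + s *: v)) t.
  exact: derivableP.
rewrite /derive /shift /= quotientE -/(derive f z v) deriveE //.
rewrite [X in 'd f z X](row_sum_delta v) linear_sum.
by apply: eq_bigr => k _; rewrite linearZ /= /partial deriveE.
Qed.

Lemma mvt_segment (x y : 'rV[R]_p) :
  (forall t : R, 0 <= t <= 1 -> differentiable f (y + t *: (x - y))) ->
  exists2 t : R, 0 <= t <= 1 &
    `|f x - f y| <= \sum_k `|(x - y) 0 k| * `|partial f k (y + t *: (x - y))|.
Proof.
move=> df; set v := x - y; set g := fun s : R => f (y + s *: v).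
set g' := fun s : R => \sum_k v 0 k * partial f k (y + s *: v).
have g_derive (t : R) : 0 <= t <= 1 -> is_derive t 1 g (g' t).
  by move=> /df; exact: is_derive_line.
have [c] : exists2 c, c \in `]0, 1[ & g 1 - g 0 = g' c * (1 - 0).
  apply: MVT => // [t|].
    by rewrite in_itv /= => /andP[t0 t1]; apply: g_derive; rewrite !ltW.
  apply: continuous_subspace_itv => t; rewrite in_itv /= => /g_derive.
  by move=> /(@ex_derive _ _ _ _ _ _ _) /derivable1_diffP /differentiable_continuous.
rewrite in_itv /= => /andP[c0 c1].
rewrite /g scale1r scale0r addr0 /v [y + _]addrC subrK subr0 mulr1 => ->.
exists c; first by rewrite !ltW.
by apply: le_trans (ler_norm_sum _ _ _) _; apply: ler_sum => k _; rewrite normrM.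
Qed.

End MeanValue.

Section Cube.
Variables (R : realType) (p : nat).

Definition cube (c : 'rV[R]_p) (r : R) : set 'rV[R]_p :=
  [set z | forall k, `|z 0 k - c 0 k| <= r].

Lemma cube_center c r : 0 <= r -> cube c r c.
Proof. by move=> r0 k; rewrite subrr normr0. Qed.

Lemma cube_segment c r x y t :
  cube c r x -> cube c r y -> 0 <= t <= 1 -> cube c r (y + t *: (x - y)).
Proof.
move=> cx cy /andP[t0 t1] k; rewrite !mxE.
have -> : y 0 k + t * (x 0 k - y 0 k) - c 0 k =
  (1 - t) * (y 0 k - c 0 k) + t * (x 0 k - c 0 k) by ring.
apply: le_trans (ler_normD _ _) _.
rewrite !normrM (ger0_norm t0) ger0_norm ?subr_ge0 //.
by have := cx k; have := cy k; nra.
Qed.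

Lemma cube_diag_shift c (A : 'M[R]_p) u s M :
  is_diag_mx A -> (forall k, `|A k k| <= s) -> enorm u <= M ->
  cube c (M * s) (c + u *m A).
Proof.
move=> A_diag A_le u_le k; rewrite mxE addrAC subrr add0r diag_mulmx_coord // normrM.
by apply: ler_pM => //; exact: le_trans (coord_le_enorm u k) u_le.
Qed.

Lemma cube_mxnorm c r z : 0 <= r -> cube c r z -> `|c - z| <= r.
Proof.
move=> r0 cz; rewrite /Num.norm /= mx_normrE.
by apply: bigmax_le => // -[i j] _ /=; rewrite (ord1 i) !mxE distrC cz.
Qed.

Lemma cube_enorm c r z : cube c r z -> enorm (z - c) <= p%:R * r.
Proof. by move=> cz; apply: enorm_le_coord => k; rewrite !mxE cz. Qed.

End Cube.

Lemma cube_sub_ball_eventually (R : realType) p (Theta : set 'rV[R]_p) thstar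
    (Tset : set R) (a : R -> 'M[R]_p) (M Rr : R) :
  open Theta -> Theta thstar ->
  (forall T, Tset T -> is_diag_mx (a T)) ->
  (forall e : R, 0 < e -> exists T0, Tset T0 /\
     forall T, Tset T -> T0 <= T -> specnorm (a T) < e) ->
  0 < M -> 0 < Rr ->
  exists T0, Tset T0 /\ forall T, Tset T -> T0 <= T ->
    cube thstar (M * specnorm (a T)) `<=` [set th | Theta th /\ enorm (th - thstar) < Rr].
Proof.
move=> Theta_open Theta_th a_diag a_small M_gt0 Rr_gt0.
have [r r_gt0 ball_Theta] : exists2 r : R, 0 < r &
    forall z, `|thstar - z| < r -> Theta z.
  have /nbhs_ballP[r r_gt0 ball_Theta] := open_nbhs_nbhs (conj Theta_open Theta_th).
  by exists r => // z z_near; apply: ball_Theta; rewrite -ball_normE.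
have rho_gt0 : 0 < Num.min r (Rr / (p%:R + 1)) by rewrite lt_min r_gt0 divr_gt0 ?ltr_wpDl.
have [T0 [T0_in a_lt]] := a_small _ (divr_gt0 rho_gt0 M_gt0).
exists T0; split=> // T T_in T0_le z z_in.
have s_ge0 := diag_specnorm_ge0 (a_diag T T_in).
have : M * specnorm (a T) < Num.min r (Rr / (p%:R + 1)).
  by rewrite mulrC -ltr_pdivlMr // a_lt.
rewrite lt_min ltr_pdivlMr ?ltr_wpDl // => /andP[Ms_lt_r Ms_lt_Rr]; split.
  apply: ball_Theta; apply: le_lt_trans Ms_lt_r.
  exact: cube_mxnorm (mulr_ge0 (ltW M_gt0) s_ge0) z_in.
apply: le_lt_trans (cube_enorm z_in) _; apply: le_lt_trans Ms_lt_Rr.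
by rewrite mulrC ler_wpM2l ?mulr_ge0 ?(ltW M_gt0) // lerDl.
Qed.

Section ScaledLipschitz.
Variables (R : realType) (p : nat) (f : 'rV[R]_p -> R) (c : 'rV[R]_p).
Variables (A : 'M[R]_p) (s M K1 K2 : R).
Hypotheses (A_diag : is_diag_mx A) (A_le : forall k, `|A k k| <= s).
Hypotheses (s_ge0 : 0 <= s) (M_ge0 : 0 <= M).
Hypothesis f_diff : forall z, cube c (M * s) z ->
  differentiable f z /\ forall j, differentiable (partial f j) z.
Hypothesis grad_le : s * d1norm f c <= K1.
Hypothesis hess_le : forall z, cube c (M * s) z -> s ^+ 2 * d2norm f z <= K2.

Lemma scaled_partial_le z j :
  cube c (M * s) z -> s * `|partial f j z| <= K1 + p%:R * M * K2.
Proof.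
move=> z_in; have c_in := cube_center c (mulr_ge0 M_ge0 s_ge0).
have [t t01] := mvt_segment (f := partial f j)
  (fun t t01 => (f_diff (cube_segment z_in c_in t01)).2 j).
set w := c + t *: (z - c) => mvt.
have w_in : cube c (M * s) w := cube_segment z_in c_in t01.
have diff_le : s * `|partial f j z - partial f j c| <= p%:R * M * K2.
  apply: (@le_trans _ _ (s * (p%:R * (M * s * d2norm f w)))).
    rewrite ler_wpM2l // -sumr_const_ord; apply: le_trans mvt _.
    apply: ler_sum => k _; apply: ler_pM => //; first by rewrite !mxE z_in.
    exact: partial_le_d2norm.
  have -> : s * (p%:R * (M * s * d2norm f w)) = p%:R * M * (s ^+ 2 * d2norm f w) by ring.
  by rewrite ler_wpM2l ?mulr_ge0 ?hess_le.
rewrite -[partial f j z](subrK (partial f j c)) addrC.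
apply: le_trans (ler_wpM2l s_ge0 (ler_normD _ _)) _; rewrite mulrDr lerD //.
by apply: le_trans grad_le; rewrite ler_wpM2l ?partial_le_d1norm.
Qed.

Lemma scaled_lipschitz u v : enorm u <= M -> enorm v <= M ->
  `|f (c + u *m A) - f (c + v *m A)| <= p%:R * enorm (u - v) * (K1 + p%:R * M * K2).
Proof.
move=> u_le v_le.
have cu_in := cube_diag_shift c A_diag A_le u_le.
have cv_in := cube_diag_shift c A_diag A_le v_le.
have [t t01] := mvt_segment (f := f) (fun t t01 => (f_diff (cube_segment cu_in cv_in t01)).1).
set w := c + v *m A + _ => mvt.
have w_in : cube c (M * s) w := cube_segment cu_in cv_in t01.
apply: le_trans mvt _; rewrite -mulrA -sumr_const_ord.
have -> : c + u *m A - (c + v *m A) = (u - v) *m A.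
  by rewrite mulmxBl opprD addrACA subrr add0r.
apply: ler_sum => k _; rewrite diag_mulmx_coord // normrM -[`|_| * _ * _]mulrA.
apply: ler_pM; rewrite ?mulr_ge0 ?coord_le_enorm //.
by apply: le_trans (scaled_partial_le k w_in); rewrite ler_wpM2r.
Qed.

End ScaledLipschitz.

Lemma div_powR_le (R : realType) (D e E C q : R) :
  0 < q -> q <= 1 -> 0 <= e -> e <= E -> 0 <= C -> D <= C * e ->
  D / powR e q <= C * powR E (1 - q).
Proof.
move=> q_gt0 q_le1 e_ge0 e_le C_ge0 D_le.
have [->|e_neq0] := eqVneq e 0.
  by rewrite powR0 ?gt_eqF // invr0 mulr0 mulr_ge0 ?powR_ge0.
have eq_gt0 : 0 < powR e q by rewrite powR_gt0 // lt_def e_neq0.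
have eE : e = powR e q * powR e (1 - q).
  by rewrite -powRD ?e_neq0 ?implybT // addrC subrK powRr1.
apply: (@le_trans _ _ (C * e / powR e q)).
  by rewrite ler_wpM2r // invr_ge0 powR_ge0.
have -> : C * e / powR e q = C * powR e (1 - q) by rewrite {1}eE; field; rewrite gt_eqF.
by rewrite ler_wpM2l // ge0_ler_powR ?nnegrE ?subr_ge0 // (le_trans e_ge0).
Qed.

Lemma max_mem (R : realType) (A : set R) x y : A x -> A y -> A (Num.max x y).
Proof. by rewrite /Order.max; case: ifP. Qed.

Section StochasticBoundedness.
Variables (R : realType) (d : measure_display) (Omega : measurableType d).
Variables (P : probability Omega R) (Tset : set R).

Lemma outer_lt_sub (A B : set Omega) e : A `<=` B -> outer_lt P B e -> outer_lt P A e.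
Proof. by move=> AB [E [E_meas BE PE]]; exists E; split=> //; exact: subset_trans BE. Qed.

Lemma outer_ltU (A B : set Omega) e1 e2 :
  outer_lt P A e1 -> outer_lt P B e2 -> outer_lt P (A `|` B) (e1 + e2).
Proof.
move=> [E1 [E1_meas AE1 PE1]] [E2 [E2_meas BE2 PE2]].
exists (E1 `|` E2); split; [exact: measurableU | exact: setUSS |].
by apply: le_lt_trans (measureU2 P E1_meas E2_meas) _; rewrite EFinD lteD.
Qed.

Lemma outer_ltU_null (A N : set Omega) e :
  measurable N -> P N = 0%E -> outer_lt P A e -> outer_lt P (A `|` N) e.
Proof.
move=> N_meas PN [E [E_meas AE PE]].
exists (E `|` N); split; [exact: measurableU | exact: setSU |].
apply: le_lt_trans (measureU2 P E_meas N_meas) _.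
set Z := (X in (_ + X < _)%E); have -> : Z = 0%E by exact: PN.
by rewrite adde0.
Qed.

Lemma OpSup_dominated (S1 S2 S : R -> Omega -> set R) (F : R -> R -> R) T3 :
  OpSup P Tset S1 -> OpSup P Tset S2 -> Tset T3 ->
  (forall T, Tset T -> T3 <= T -> exists N, [/\ measurable N, P N = 0%E &
     forall w, ~ N w -> forall K1 K2, 0 < K1 -> 0 < K2 ->
       (forall x, S1 T w x -> x <= K1) -> (forall x, S2 T w x -> x <= K2) ->
       forall x, S T w x -> x <= F K1 K2]) ->
  OpSup P Tset S.
Proof.
move=> S1_Op S2_Op T3_in S_le eps eps_gt0.
have [T1 [T1_in [K1 [K1_gt0 S1_out]]]] := S1_Op _ (divr_gt0 eps_gt0 (ltr0n _ 2)).
have [T2 [T2_in [K2 [K2_gt0 S2_out]]]] := S2_Op _ (divr_gt0 eps_gt0 (ltr0n _ 2)).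
exists (Num.max T1 (Num.max T2 T3)); split; first by do 2?apply: max_mem.
exists (Num.max 1 (F K1 K2)); split=> [|T T_in]; first by rewrite lt_max ltr01.
rewrite !ge_max => /and3P[T1_le T2_le T3_le].
have [N [N_meas PN N_le]] := S_le T T_in T3_le.
rewrite [eps]splitr; apply: outer_lt_sub (outer_ltU_null N_meas PN
  (outer_ltU (S1_out T T_in T1_le) (S2_out T T_in T2_le))).
move=> w [x [Sx Kx]]; apply: contrapT => /not_orP[/not_orP[S1w S2w] Nw].
have S1_le x1 : S1 T w x1 -> x1 <= K1.
  by move=> S1x1; rewrite leNgt; apply/negP => lt; apply: S1w; exists x1.
have S2_le x2 : S2 T w x2 -> x2 <= K2.
  by move=> S2x2; rewrite leNgt; apply/negP => lt; apply: S2w; exists x2.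
move: Kx; rewrite gt_max => /andP[_]; apply/negP; rewrite -leNgt.
exact: N_le S1_le S2_le _ Sx.
Qed.

End StochasticBoundedness.

Lemma rescaled_lipschitz_eventually (R : realType) p (Theta : set 'rV[R]_p)
    (thstar : 'rV[R]_p) (d : measure_display) (Omega : measurableType d)
    (P : probability Omega R) (Tset : set R) (H : R -> Omega -> 'rV[R]_p -> R)
    (a : R -> 'M[R]_p) (Rr M : R) :
  let B := [set th | Theta th /\ enorm (th - thstar) < Rr] in
  open Theta -> Theta thstar ->
  (forall T, Tset T -> is_diag_mx (a T)) ->
  (forall e : R, 0 < e -> exists T0, Tset T0 /\
     forall T, Tset T -> T0 <= T -> specnorm (a T) < e) ->
  0 < Rr -> 0 < M ->
  (forall T, Tset T -> exists N, [/\ measurable N, P N = 0%E &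
     [set w | ~ thrice_diff_on (H T w) B] `<=` N]) ->
  exists T0, Tset T0 /\ forall T, Tset T -> T0 <= T ->
    exists N, [/\ measurable N, P N = 0%E & forall w, ~ N w -> forall K1 K2 : R,
      (forall x, [set `|specnorm (a T) * d1norm (H T w) thstar|] x -> x <= K1) ->
      (forall x, [set specnorm (a T) ^+ 2 * d2norm (H T w) th | th in B] x -> x <= K2) ->
      forall u v, enorm u <= M -> enorm v <= M ->
      `|H T w (thstar + u *m a T) - H T w (thstar + v *m a T)|
        <= p%:R * enorm (u - v) * (K1 + p%:R * M * K2)].
Proof.
move=> B Theta_open Theta_th a_diag a_small Rr_gt0 M_gt0 B_diff.
have [T0 [T0_in cube_B]] :=
  cube_sub_ball_eventually Theta_open Theta_th a_diag a_small M_gt0 Rr_gt0.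
exists T0; split=> // T T_in T0_le; have [N [N_meas PN H_diff]] := B_diff T T_in.
exists N; split=> // w Nw K1 K2 K1_ub K2_ub u v u_le v_le.
have H_smooth : thrice_diff_on (H T w) B by apply: contrapT => /H_diff.
apply: (scaled_lipschitz (s := specnorm (a T))) => //.
- exact: a_diag.
- exact: diag_entry_le_specnorm (a_diag T T_in).
- exact: diag_specnorm_ge0 (a_diag T T_in).
- exact: ltW.
- by move=> z /(cube_B T T_in T0_le) /H_smooth [].
- exact: le_trans (ler_norm _) (K1_ub _ erefl).
- by move=> z /(cube_B T T_in T0_le) Bz; apply: K2_ub; exists z.
Qed.

Unset Implicit Arguments.

Theorem proposition3
  (R : realType) (p : nat)
  (Theta : set 'rV[R]_p) (thstar : 'rV[R]_p)
  (d : measure_display) (Omega : measurableType d) (P : probability Omega R)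
  (Tset : set R)
  (H : R -> Omega -> 'rV[R]_p -> R)
  (a : R -> 'M[R]_p)
  (q : R) :
  (* Theta bounded open, thstar in Theta *)
  open Theta ->
  (exists C : R, forall th, Theta th -> enorm th <= C) ->
  Theta thstar ->
  (* the time set *)
  (forall T, Tset T -> 0 <= T) ->
  (forall C : R, exists T, Tset T /\ C < T) ->
  (* H_T is a random field on closure Theta, continuous in theta *)
  (forall T, Tset T -> forall th, closure Theta th ->
     measurable_fun setT (fun w => H T w th)) ->
  (forall T, Tset T -> forall w, {within closure Theta, continuous (H T w)}) ->
  (* a_T deterministic invertible diagonal with ||a_T|| -> 0 *)
  (forall T, Tset T -> is_diag_mx (a T) /\ a T \in unitmx) ->
  (forall e : R, 0 < e -> exists T0, Tset T0 /\
     forall T, Tset T -> T0 <= T -> specnorm (a T) < e) ->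
  (* q in (0,1] *)
  0 < q -> q <= 1 ->
  (* [A7'] *)
  (exists Rr : R, 0 < Rr /\
    let B := [set th | Theta th /\ enorm (th - thstar) < Rr] in
    [/\ (forall T, Tset T -> exists N, [/\ measurable N, (P N = 0)%E &
            [set w | ~ thrice_diff_on (H T w) B] `<=` N]),
        Op1 P Tset (fun T w => specnorm (a T) * d1norm (H T w) thstar),
        OpSup P Tset (fun T w =>
          [set specnorm (a T) ^+ 2 * d2norm (H T w) th | th in B]) &
        OpSup P Tset (fun T w =>
          [set specnorm (a T) ^+ 2 * d3norm (H T w) th | th in B])]) ->
  (* [A8] *)
  (forall M : R, 0 < M ->
     OpSup P Tset (fun T w =>
       [set `|H T w (thstar + u *m a T) - H T w thstar|
          | u in [set u | closure Theta (thstar + u *m a T) /\ enorm u < M]])) /\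
  (* [A9] *)
  (forall M : R, 0 < M ->
     OpSup P Tset (fun T w =>
       [set x | exists u v : 'rV[R]_p,
          [/\ closure Theta (thstar + u *m a T), closure Theta (thstar + v *m a T),
              enorm u < M, enorm v < M & u != v] /\
          x = `|H T w (thstar + u *m a T) - H T w (thstar + v *m a T)|
                / powR (enorm (u - v)) q])).

Proof.
move=> Theta_open _ Theta_th _ _ _ _ a_reg a_small q_gt0 q_le1 [Rr [Rr_gt0]].
set B := [set th | _]; case=> B_diff grad_Op hess_Op _.
have a_diag T : Tset T -> is_diag_mx (a T) by case/a_reg.
have K_ge0 (M K1 K2 : R) : 0 < M -> 0 < K1 -> 0 < K2 -> 0 <= K1 + p%:R * M * K2.
  by move=> M_gt0 K1_gt0 K2_gt0; rewrite addr_ge0 ?mulr_ge0 // ltW.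
split=> M M_gt0; have [T0 [T0_in H_lip]] := rescaled_lipschitz_eventually
  Theta_open Theta_th a_diag a_small Rr_gt0 M_gt0 B_diff.
  apply: (OpSup_dominated grad_Op hess_Op T0_in
    (F := fun K1 K2 => p%:R * M * (K1 + p%:R * M * K2))).
  move=> T T_in T0_le; have [N [N_meas PN H_lipN]] := H_lip T T_in T0_le.
  exists N; split=> // w Nw K1 K2 K1_gt0 K2_gt0 K1_ub K2_ub _ [u [_ u_lt] <-].
  have := H_lipN w Nw K1 K2 K1_ub K2_ub u 0 (ltW u_lt).
  rewrite enorm0 mul0mx addr0 subr0 => /(_ (ltW M_gt0)) /le_trans; apply.
  by rewrite ler_wpM2r ?K_ge0 // ler_wpM2l // ltW.
apply: (OpSup_dominated grad_Op hess_Op T0_in (F := fun K1 K2 =>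
  p%:R * (K1 + p%:R * M * K2) * powR (p%:R * (2 * M)) (1 - q))).
move=> T T_in T0_le; have [N [N_meas PN H_lipN]] := H_lip T T_in T0_le.
exists N; split=> // w Nw K1 K2 K1_gt0 K2_gt0 K1_ub K2_ub _ [u [v [[_ _ u_lt v_lt _] ->]]].
apply: div_powR_le; rewrite ?enorm_ge0 ?mulr_ge0 ?K_ge0 //.
  exact: enorm_subr_le (ltW u_lt) (ltW v_lt).
by rewrite mulrAC; apply: H_lipN; rewrite ?ltW.
Qed.
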